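(* Let $n\ge 1$ and let $\mathcal{S}_n$ be the Shi arrangement in $\mathbb{R}^n$, consisting of the hyperplanes $x_i - x_j = 0$ and $x_i - x_j = 1$ for all $1 \leq i < j \leq n$. The map $\sigma_n$ (defined below) is a bijection between the set of regions of $\mathcal{S}_n$ and the set of parking functions on $[n]$.
   Context: A region of an arrangement is a connected component of the complement of the union of its hyperplanes. A parking function on $[n]=\{1,\ldots,n\}$ is a map $f:[n]\to[n]$ such that for every $1\le j\le n$ the set $f^{-1}(\{1,\ldots,j\})$ has at least $j$ elements. The diagram of a region $R$ of $\mathcal{S}_n$ is defined as follows. Let $w=w_1w_2\cdots w_n$ be the unique permutation of $[n]$ such that $x_{w_1}>x_{w_2}>\cdots>x_{w_n}$ holds on $R$; the position of $m\in[n]$ is the index $p$ with $w_p=m$. For each pair $i<j$ such that $x_i-x_j>1$ holds on $R$, draw an arc from $i$ to $j$ (it goes rightwards in $w$). Then remove every arc that contains another arc: an arc $(i,l)$ is removed if there is a different arc $(j,k)$ with $i$ weakly to the left of $j$ and $k$ weakly to the left of $l$ in $w$. The remaining arcs partition $[n]$ into chains (the connected components under the remaining arcs), each consisting of increasing integers. The map $\sigma_n$ sends $R$ to the function $f:[n]\to[n]$ where $f(i)$ is the position in $w$ of the leftmost element of the chain containing $i$. *)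

From HB Require Import structures.
From mathcomp Require Import all_boot all_order all_algebra.
From mathcomp Require Import all_classical all_reals all_analysis.
Set Implicit Arguments. Unset Strict Implicit. Unset Printing Implicit Defensive.
Import Order.TTheory GRing.Theory Num.Theory.
Import numFieldTopology.Exports numFieldNormedType.Exports.
Local Open Scope classical_set_scope.
Local Open Scope ring_scope.

(* Conventions: the index set [n] = {1,..,n} is represented by 'I_n, the
   ordinal i : 'I_n standing for the integer i+1 (so the order on indices is
   preserved).  Values of functions [n] -> [n] are natural numbers in 1..n. *)

Section Shi.
Variables (R : realType) (n : nat).

Definition coord (x : 'rV[R]_n) (i : 'I_n) : R := x ord0 i.

Definition shi_complement : set 'rV[R]_n :=
  [set x | forall i j : 'I_n, (i < j)%N ->
     coord x i - coord x j != 0 /\ coord x i - coord x j != 1].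

Definition shi_regions : set (set 'rV[R]_n) :=
  [set connected_component shi_complement x | x in shi_complement].

Definition holds_on (Rg : set 'rV[R]_n) (P : 'rV[R]_n -> Prop) : Prop :=
  forall x, Rg x -> P x.

(* position (1-based) of m in the word w with x_{w_1} > ... > x_{w_n} on Rg:
   one plus the number of k with x_k > x_m on Rg *)
Definition shi_pos (Rg : set 'rV[R]_n) (m : 'I_n) : nat :=
  (#|[set k : 'I_n | `[< holds_on Rg (fun x => coord x m < coord x k) >]]|).+1.

Definition shi_arc (Rg : set 'rV[R]_n) (i j : 'I_n) : bool :=
  (i < j)%N && `[< holds_on Rg (fun x => 1 < coord x i - coord x j) >].

Definition shi_kept_arc (Rg : set 'rV[R]_n) (i l : 'I_n) : bool :=
  shi_arc Rg i l &&
  ~~ [exists j : 'I_n, exists k : 'I_n,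
        [&& shi_arc Rg j k, (j, k) != (i, l),
            (shi_pos Rg i <= shi_pos Rg j)%N & (shi_pos Rg k <= shi_pos Rg l)%N]].

Definition shi_adj (Rg : set 'rV[R]_n) : rel 'I_n :=
  fun a b => shi_kept_arc Rg a b || shi_kept_arc Rg b a.

Definition same_chain (Rg : set 'rV[R]_n) (a b : 'I_n) : bool :=
  connect (shi_adj Rg) a b.

(* sigma_n(Rg)(i) = position of the leftmost element of the chain of i
   (the minimal position among the elements of the chain) *)
Definition sigma_shi (Rg : set 'rV[R]_n) : {ffun 'I_n -> nat} :=
  [ffun i => \big[minn/n.+1]_(c : 'I_n | same_chain Rg i c) shi_pos Rg c].

End Shi.

Definition parking_function (n : nat) (f : {ffun 'I_n -> nat}) : Prop :=
  (forall i, (1 <= f i <= n)%N) /\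
  (forall j : nat, (1 <= j <= n)%N -> (j <= #|[set i : 'I_n | (f i <= j)%N]|)%N).

From Pilot Require Import Defs.
From HB Require Import structures.
From mathcomp Require Import all_classical all_reals all_analysis.
From mathcomp Require Import all_boot all_order all_algebra.
From mathcomp Require Import zify ring lra.
Set Implicit Arguments. Unset Strict Implicit. Unset Printing Implicit Defensive.
Import Order.TTheory GRing.Theory Num.Theory.
Import numFieldTopology.Exports numFieldNormedType.Exports.

(* A region is determined by the order of the coordinates and by its arcs.
   The arcs are upward closed for the positions, so they are determined by
   the positions together with the minimal arcs (the remaining arcs).  These
   form chains, never nest, and sigma is the position of the chain head; so
   the position function is a "queue order": chain heads sit at their value
   of sigma, and the successors along chains are placed in the same order as
   their predecessors.  The chains are the fibers of sigma and the remaining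
   arcs join consecutive elements of a fiber, and a queue order is unique, so
   sigma determines the positions and then all arcs: sigma is injective.
   For a parking function f, placing at each position p either the fiber
   minimum of value p, or else the pending successor whose predecessor came
   first, builds a queue order for the fibers of f (the parking condition
   keeps the queue nonempty); a point realizing it is found by choosing its
   coordinates from the last position to the first. *)

Section Ranking.
Variable n : nat.

Definition ranking (P : 'I_n -> nat) := injective P /\ forall i, 0 < P i <= n.

Variable P : 'I_n -> nat.
Hypothesis rkP : ranking P.

Let P_lt i : (P i).-1 < n.
Proof. by case: rkP => _ /(_ i); case: (P i). Qed.

Let Q i : 'I_n := Ordinal (P_lt i).

Let Q_inj : injective Q.
Proof.
case: rkP => Pinj Pr i j /(congr1 val) /= eqP; apply: Pinj.
by move: (Pr i) (Pr j) eqP; case: (P i); case: (P j) => //= ? ? _ _ ->.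
Qed.

Lemma ranking_onto v : 0 < v <= n -> exists i, P i = v.
Proof.
case: v => // v /andP [_ vn]; have /codomP [i Qi] := injF_onto Q_inj (Ordinal vn).
exists i; move/(congr1 val): Qi => /= ->.
by case: rkP => _ /(_ i); case: (P i).
Qed.

Lemma card_ranking_leq j : j <= n -> #|[set i | P i <= j]| = j.
Proof.
move=> jn; have -> : [set i | P i <= j] = Q @^-1: [set o : 'I_n | o < j].
  by apply/setP=> i; rewrite !inE /=; case: rkP => _ /(_ i); case: (P i).
have widen_inj : injective (widen_ord jn) by move=> a b /(congr1 val) /= /val_inj.
rewrite card_preimset // -[j in RHS](card_ord j) -(card_imset _ widen_inj).
apply: eq_card => o; rewrite !inE; apply/idP/imsetP => [oj|[p _ ->] /=].
  by exists (Ordinal oj) => //; apply: val_inj.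
exact: ltn_ord.
Qed.

End Ranking.

Lemma ranking_eq n (P P' : 'I_n -> nat) : ranking P -> ranking P' ->
  (forall a b, (P a <= P b) = (P' a <= P' b)) -> P =1 P'.
Proof.
move=> rkP rkP' same_le a; have [/andP [_ Pa_n] /andP [_ P'a_n]] := (proj2 rkP a, proj2 rkP' a).
rewrite -(card_ranking_leq rkP Pa_n) -(card_ranking_leq rkP' P'a_n).
by apply: eq_card => b; rewrite !inE same_le.
Qed.

Section FiberNext.
Variables (n : nat) (g : 'I_n -> nat).

Definition fiber_next (c d : 'I_n) : bool :=
  [&& g c == g d, c < d & [forall e, (g e == g d) ==> ~~ (c < e < d)]].

Definition fiber_min (a : 'I_n) : bool := [forall b, (g b == g a) ==> (a <= b)].

Definition fiber_prev (d : 'I_n) : 'I_n := odflt d [pick c | fiber_next c d].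

Lemma fiber_next_eq c d : fiber_next c d -> g c = g d.
Proof. by case/andP=> /eqP. Qed.

Lemma fiber_next_lt c d : fiber_next c d -> c < d.
Proof. by case/and3P. Qed.

Lemma fiber_next_inj c c' d : fiber_next c d -> fiber_next c' d -> c = c'.
Proof.
move=> /and3P [/eqP gc cd /forallP nc] /and3P [/eqP gc' c'd /forallP nc'].
apply/val_inj/eqP; case: ltngtP => // lt.
  by have := nc c'; rewrite gc' eqxx lt c'd.
by have := nc' c; rewrite gc eqxx lt cd.
Qed.

Lemma fiber_next_fun c d d' : fiber_next c d -> fiber_next c d' -> d = d'.
Proof.
move=> /and3P [/eqP gc cd /forallP nc] /and3P [/eqP gc' cd' /forallP nc'].
apply/val_inj/eqP; case: ltngtP => // lt.
  by have := nc' d; rewrite -gc' gc eqxx cd lt.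
by have := nc d'; rewrite -gc gc' eqxx cd' lt.
Qed.

Lemma fiber_next_exists d : ~~ fiber_min d -> exists c, fiber_next c d.
Proof.
case/forallPn=> b; rewrite negb_imply -ltnNge => /andP [gb bd].
have [c /andP [gc cd] cmax] := @arg_maxnP _ b (fun c => (g c == g d) && (c < d))
  (fun c : 'I_n => val c) (introT andP (conj gb bd)).
exists c; rewrite /fiber_next gc cd; apply/forallP=> e; apply/implyP=> ge.
by apply/negP=> /andP [ce ed]; have := cmax e; rewrite ge ed /= leqNgt ce => /(_ isT).
Qed.

Lemma fiber_minE d : fiber_min d = [forall c, ~~ fiber_next c d].
Proof.
apply/idP/forallP => [/forallP dmin c|]; last first.
  by move=> nprev; apply/negPn/negP => /fiber_next_exists [c]; rewrite (negbTE (nprev c)).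
apply/negP=> /and3P [gc cd _].
by have := dmin c; rewrite gc leqNgt cd.
Qed.

Lemma fiber_prevP d : ~~ fiber_min d -> fiber_next (fiber_prev d) d.
Proof.
move=> /fiber_next_exists [c cd]; rewrite /fiber_prev.
by case: pickP => [//|/(_ c)]; rewrite cd.
Qed.

Lemma fiber_next_nmin c d : fiber_next c d -> ~~ fiber_min d.
Proof. by move=> cd; rewrite fiber_minE negb_forall; apply/existsP; exists c; rewrite cd. Qed.

Lemma fiber_prevE c d : fiber_next c d -> fiber_prev d = c.
Proof. by move=> cd; apply: fiber_next_inj (fiber_prevP (fiber_next_nmin cd)) cd. Qed.

Lemma fiber_prev_inj a b :
  ~~ fiber_min a -> ~~ fiber_min b -> fiber_prev a = fiber_prev b -> a = b.
Proof.
move=> a_nmin b_nmin same_prev; have := fiber_prevP b_nmin; rewrite -same_prev.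
exact: fiber_next_fun (fiber_prevP a_nmin).
Qed.

Lemma fiber_min_inj a b : fiber_min a -> fiber_min b -> g a = g b -> a = b.
Proof.
move=> /forallP amin /forallP bmin gab; apply/val_inj/eqP; rewrite eqn_leq.
by have := implyP (amin b); have := implyP (bmin a); rewrite gab eqxx => -> // ->.
Qed.

Lemma fiber_min_exists a : exists2 h, fiber_min h & g h = g a.
Proof.
have [h /eqP gh hmin] := @arg_minnP _ a (fun c => g c == g a) (fun c : 'I_n => val c) (eqxx _).
exists h => //; apply/forallP=> b; apply/implyP; rewrite gh => /eqP gb.
by apply: hmin; rewrite gb.
Qed.

End FiberNext.

Lemma eq_fiber_next n (g1 g2 : 'I_n -> nat) :
  fiber_next g1 =2 fiber_next g2 -> {in fiber_min g1, g1 =1 g2} -> g1 =1 g2.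
Proof.
move=> eq_next eq_min a; suff : forall k (b : 'I_n), b < k -> g1 b = g2 b.
  by apply; exact: ltnSn.
elim=> // k IH b bk; case: (boolP (fiber_min g1 b)) => [|/fiber_prevP cb].
  exact: eq_min.
have cb2 := cb; rewrite eq_next in cb2.
rewrite -(fiber_next_eq cb) -(fiber_next_eq cb2) IH //.
by apply: leq_trans (fiber_next_lt cb) _; rewrite -ltnS.
Qed.

Section QueueOrder.
Variables (n : nat) (K : rel 'I_n) (g : 'I_n -> nat).

Definition queue_order (P : 'I_n -> nat) :=
  [/\ ranking P,
      forall h, [forall c, ~~ K c h] -> P h = g h,
      forall c d, K c d -> P c < P d &
      forall c d c' d', K c d -> K c' d' -> (P c < P c') = (P d < P d')].

Lemma queue_order_no_nest P c d c' d' : queue_order P -> K c d -> K c' d' ->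
  P c <= P c' -> P d' <= P d -> c = c' /\ d = d'.
Proof.
case=> [[P_inj _] _ _ nest] cd c'd' cc' d'd.
have c_eq : c = c'.
  by apply: P_inj; apply/eqP; rewrite eqn_leq cc' leqNgt (nest _ _ _ _ cd c'd') -leqNgt.
split=> //; subst c'; apply: P_inj; apply/eqP.
by rewrite eqn_leq d'd andbT leqNgt -(nest _ _ _ _ c'd' cd) ltnn.
Qed.

Section Unique.
Variables P1 P2 : 'I_n -> nat.
Hypotheses (qo1 : queue_order P1) (qo2 : queue_order P2).

Lemma queue_order_transfer p :
  (forall a, P1 a < p -> P2 a = P1 a) -> forall b, P2 b < p -> P1 b = P2 b.
Proof.
case: qo1 qo2 => [[inj1 rg1] _ _ _] [[inj2 rg2] _ _ _] agree b b_p.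
have [a a_b] := ranking_onto (conj inj1 rg1) (rg2 b).
have /inj2 ab : P2 a = P2 b by rewrite -a_b; apply: agree; rewrite a_b.
by rewrite -{1}ab a_b.
Qed.

Lemma queue_order_step p a :
  (forall a, P1 a < p -> P2 a = P1 a) -> P1 a = p -> P2 a = p.
Proof.
move=> agree a_p; have back := queue_order_transfer agree.
case: qo1 qo2 => [[inj1 rg1] head1 before1 nest1] [[inj2 rg2] head2 before2 nest2].
have [b] := ranking_onto (conj inj2 rg2) (rg1 a); rewrite a_p => b_p.
case: (boolP [forall c, ~~ K c a]) => [ha|/forallPn [c /negPn ca]].
  by rewrite head2 // -head1.
case: (boolP [forall c, ~~ K c b]) => [hb|/forallPn [c' /negPn c'b]].
  by have /inj1 <- : P1 b = P1 a by rewrite head1 // -head2 // b_p.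
(* Otherwise P1 puts a before b and P2 puts b before a, although both place
   the predecessors c and c' alike: one of the two orders nests two arcs. *)
apply/eqP/negPn/negP => a_not_p.
have a_late : p < P2 a.
  rewrite ltn_neqAle eq_sym a_not_p leqNgt /=; apply/negP => /back.
  by move=> P1a; move: a_not_p; rewrite -P1a a_p eqxx.
have b_late : p < P1 b.
  rewrite ltn_neqAle leqNgt; apply/andP; split.
    by apply: contra a_not_p; rewrite -{1}a_p => /eqP /inj1 ->; rewrite b_p.
  apply/negP => b_early; move: (agree _ b_early); rewrite b_p => p_b.
  by rewrite -p_b ltnn in b_early.
have P2c : P2 c = P1 c by apply: agree; rewrite -a_p before1.
have P1c' : P1 c' = P2 c' by apply: back; rewrite -b_p before2.
have := nest1 _ _ _ _ ca c'b; rewrite a_p b_late.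
have := nest2 _ _ _ _ c'b ca; rewrite b_p a_late P2c -P1c'.
by move=> lt1 lt2; move: (ltn_trans lt1 lt2); rewrite ltnn.
Qed.

End Unique.

Lemma queue_order_unique P1 P2 : queue_order P1 -> queue_order P2 -> P1 =1 P2.
Proof.
move=> qo1 qo2; suff agree p a : P1 a < p -> P2 a = P1 a by move=> a; rewrite (agree (P1 a).+1).
elim: p a => // p IH a; rewrite ltnS leq_eqVlt => /orP [/eqP a_p|]; last exact: IH.
by rewrite a_p; exact: (queue_order_step qo1 qo2 IH a_p).
Qed.

End QueueOrder.

Lemma index_rcons_mem (T : eqType) (s : seq T) c a :
  a \in s -> index a (rcons s c) = index a s.
Proof. by move=> a_s; rewrite -cats1 index_cat a_s. Qed.

Lemma index_rcons_last (T : eqType) (s : seq T) c :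
  c \notin s -> index c (rcons s c) = size s.
Proof. by move=> c_s; rewrite -cats1 index_cat (negbTE c_s) /= eqxx addn0. Qed.

Section QueueConstruction.
Variables (n : nat) (f : 'I_n -> nat).
Hypothesis f_range : forall i, 0 < f i <= n.
Hypothesis f_park : forall j, 0 < j <= n -> j <= #|[set i | f i <= j]|.

Local Notation fmin := (fiber_min f).
Local Notation prev := (fiber_prev f).

Definition pending (s : seq 'I_n) (b : 'I_n) :=
  [&& ~~ fmin b, b \notin s & prev b \in s].

(* [s] is an initial segment of the greedy word: position p receives the
   fiber minimum of value p if there is one, and otherwise the pending element
   whose predecessor was placed first. *)
Record queue_prefix (s : seq 'I_n) : Prop := QueuePrefix {
  qp_uniq : uniq s;
  qp_min : {in s, forall a, fmin a -> f a = (index a s).+1};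
  qp_prev : {in s, forall a, ~~ fmin a -> index (prev a) s < index a s};
  qp_gap : {in s, forall a, ~~ fmin a -> (index a s).+1 \notin codom f};
  qp_fifo : {in s &, forall a b, ~~ fmin a -> ~~ fmin b ->
    index (prev a) s < index (prev b) s -> index a s < index b s};
  qp_pending : {in s, forall a b, ~~ fmin a -> pending s b ->
    index (prev a) s < index (prev b) s}
}.

Section Extension.
Variables (s : seq 'I_n) (c : 'I_n).
Hypothesis qs : queue_prefix s.
Hypothesis c_new : c \notin s.
Hypothesis c_min : fmin c -> f c = (size s).+1.
Hypothesis c_pending : ~~ fmin c -> pending s c.
Hypothesis c_gap : ~~ fmin c -> (size s).+1 \notin codom f.
Hypothesis c_first : ~~ fmin c -> forall b, pending s b -> index (prev c) s <= index (prev b) s.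

Let s' := rcons s c.

Let index_old a : a \in s -> index a s' = index a s.
Proof. exact: index_rcons_mem. Qed.

Let index_new : index c s' = size s.
Proof. exact: index_rcons_last. Qed.

Let prev_old a : a \in s -> ~~ fmin a -> prev a \in s.
Proof. by move=> a_s a_min; rewrite -index_mem (ltn_trans (qp_prev qs a_s a_min)) ?index_mem. Qed.

Let prev_mem a : a \in s' -> ~~ fmin a -> prev a \in s.
Proof.
rewrite mem_rcons in_cons => /orP [/eqP -> /c_pending /and3P [] //|]; exact: prev_old.
Qed.

Let mem_s' a : a \in s' = (a == c) || (a \in s).
Proof. by rewrite mem_rcons in_cons. Qed.

Let index_prev a : a \in s' -> ~~ fmin a -> index (prev a) s' = index (prev a) s.
Proof. by move=> a_s' a_min; rewrite index_old // prev_mem. Qed.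

Lemma queue_prefix_rcons : queue_prefix s'.
Proof.
split.
- by rewrite rcons_uniq c_new qp_uniq.
- move=> a; rewrite mem_s' => /orP [/eqP -> |a_s]; first by rewrite index_new.
  by rewrite index_old //; exact: qp_min.
- move=> a a_s' a_min; rewrite index_prev //.
  move: a_s' a_min; rewrite mem_s' => /orP [/eqP ->|a_s a_min].
    by move=> /c_pending /and3P [_ _]; rewrite index_new index_mem.
  by rewrite index_old // qp_prev.
- move=> a; rewrite mem_s' => /orP [/eqP -> /c_gap|a_s a_min]; first by rewrite index_new.
  by rewrite index_old // qp_gap.
- move=> a b a_s' b_s' a_min b_min; rewrite !index_prev //.
  move: a_s' b_s' a_min b_min; rewrite !mem_s'.
  case/orP => [/eqP ->|a_s]; case/orP => [/eqP ->|b_s] a_min b_min; rewrite ?ltnn //.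
  + move=> lt; have := qp_pending qs b_s b_min (c_pending a_min).
    by rewrite ltnNge (ltnW lt).
  + by rewrite index_new index_old // index_mem.
  + by rewrite !index_old //; exact: qp_fifo.
- move=> a a_s' b a_min /and3P [b_min]; rewrite mem_s' negb_or => /andP [b_c b_new].
  rewrite mem_s' index_prev //; case/orP => [/eqP pb_c|pb_s].
    by rewrite pb_c index_new index_mem prev_mem.
  rewrite index_old //; move: a_s' a_min; rewrite mem_s' => /orP [/eqP ->|a_s a_min].
    move=> c_nmin; have [_ _ pc_s] := and3P (c_pending c_nmin).
    rewrite ltn_neqAle (c_first c_nmin) ?andbT; last by rewrite /pending b_min b_new pb_s.
    by apply: contra b_c => /eqP/(index_inj c pc_s pb_s)/(fiber_prev_inj c_nmin b_min) ->.
  by apply: qp_pending => //; rewrite /pending b_min b_new pb_s.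
Qed.

End Extension.

Lemma queue_prefix_min_mem s b :
  queue_prefix s -> fmin b -> f b <= size s -> b \in s.
Proof.
move=> qs b_min fb; have fb_pos : 0 < f b by case/andP: (f_range b).
have lt : (f b).-1 < size s by rewrite prednK.
set e := nth b s (f b).-1; have e_s : e \in s := mem_nth b lt.
have ie : index e s = (f b).-1 := index_uniq b lt (qp_uniq qs).
have e_min : fmin e.
  apply: contraT => /(qp_gap qs e_s); rewrite ie prednK //.
  by rewrite codom_f.
have fe : f e = f b by rewrite (qp_min qs e_s e_min) ie prednK.
by rewrite -(fiber_min_inj e_min b_min fe).
Qed.

Lemma pending_exists s : queue_prefix s -> size s < n ->
  (size s).+1 \notin codom f -> exists b, pending s b.
Proof.
move=> qs sn gap; set q := size s in sn gap *.
have [b0 small0] : exists b, (f b <= q) && (b \notin s).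
  have := f_park (j := q.+1); rewrite sn => /(_ isT).
  have -> : [set i | f i <= q.+1] = [set i | f i <= q].
    apply/setP=> i; rewrite !inE leq_eqVlt ltnS orb_idl // => /eqP fi.
    by rewrite -fi codom_f in gap.
  move=> card_q; have : ~~ ([set i | f i <= q] \subset s).
    apply/negP => /subset_leq_card; rewrite (card_uniqP (qp_uniq qs)) => card_s.
    by have := leq_trans card_q card_s; rewrite ltnn.
  by case/subsetPn => b; rewrite !inE => fb b_new; exists b; rewrite fb b_new.
have [b /andP [fb b_new] b_least] := @arg_minnP _ b0
  (fun c => (f c <= q) && (c \notin s)) (fun c : 'I_n => val c) small0.
have b_nmin : ~~ fmin b.
  by apply: contra b_new => b_min; apply: queue_prefix_min_mem.
have pb := fiber_prevP b_nmin; exists b; rewrite /pending b_nmin b_new /=.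
apply: contraT => pb_new; have := b_least _ (introT andP (conj _ pb_new)).
by rewrite (fiber_next_eq pb) fb leqNgt (fiber_next_lt pb) => /(_ isT).
Qed.

Lemma queue_prefix_grow s :
  queue_prefix s -> size s < n -> exists c, queue_prefix (rcons s c).
Proof.
move=> qs sn; case: (boolP ((size s).+1 \in codom f)) => [/codomP [a fa]|gap].
  have [c c_min fc] := fiber_min_exists f a; exists c.
  have c_new : c \notin s.
    apply/negP => c_s; have := qp_min qs c_s c_min; rewrite fc -fa.
    by move=> [/eqP]; rewrite eqn_leq leqNgt index_mem c_s.
  by apply: queue_prefix_rcons; rewrite ?fc ?c_min.
have [b0 pend0] := pending_exists qs sn gap.
have [c c_pend c_first] := @arg_minnP _ b0 (pending s) (fun c => index (prev c) s) pend0.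
exists c; have [c_nmin c_new _] := and3P c_pend.
by apply: queue_prefix_rcons; rewrite ?(negbTE c_nmin).
Qed.

Lemma queue_prefix_exists k : k <= n -> exists2 s, size s = k & queue_prefix s.
Proof.
elim: k => [|k IH] kn; first by exists [::].
have [s sk qs] := IH (ltnW kn); have [|c qc] := queue_prefix_grow qs; first by rewrite sk.
by exists (rcons s c); rewrite ?size_rcons ?sk.
Qed.

Lemma parking_queue_order : exists P, queue_order (fiber_next f) f P.
Proof.
have [s sn qs] := queue_prefix_exists (leqnn n).
have all_s a : a \in s.
  have /subset_cardP/(_ (subset_predT _)) all_s : #|s| = #|'I_n|.
    by rewrite (card_uniqP (qp_uniq qs)) sn card_ord.
  by rewrite all_s.
exists (fun a => (index a s).+1); split.
- split; first by move=> a b [] /(index_inj a (all_s a) (all_s b)).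
  by move=> a; have := all_s a; rewrite -index_mem sn.
- by move=> h; rewrite -fiber_minE => /(qp_min qs (all_s h)).
- move=> c d cd /=; rewrite ltnS -(fiber_prevE cd).
  exact: (qp_prev qs (all_s d) (fiber_next_nmin cd)).
move=> c d c' d' cd c'd' /=; rewrite !ltnS -(fiber_prevE cd) -(fiber_prevE c'd').
have [d_nmin d'_nmin] := (fiber_next_nmin cd, fiber_next_nmin c'd').
apply/idP/idP; first exact: qp_fifo.
move=> lt; rewrite ltn_neqAle leqNgt; apply/andP; split.
  apply: contraTneq lt => /(index_inj c (all_s _) (all_s _)).
  by move=> /(fiber_prev_inj d_nmin d'_nmin) ->; rewrite ltnn.
by apply/negP => /(qp_fifo qs (all_s d') (all_s d) d'_nmin d_nmin); rewrite ltnNge ltnW.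
Qed.

End QueueConstruction.

Local Open Scope ring_scope.

Lemma connect_last_step (T : finType) (e : rel T) a c :
  connect e a c -> a != c -> exists2 b, connect e a b & e b c.
Proof.
case/connectP=> p; elim/last_ind: p => [|p z _]; first by move=> _ -> /eqP.
rewrite rcons_path last_rcons => /andP [pth ez] -> _.
by exists (last a p) => //; apply/connectP; exists p.
Qed.

Lemma connect_first_step (T : finType) (e : rel T) a c :
  connect e a c -> a != c -> exists2 b, e a b & connect e b c.
Proof.
case/connectP=> [[|z p]]; first by move=> _ -> /eqP.
by move=> /= /andP [ez pth] -> _; exists z => //; apply/connectP; exists p.
Qed.

(* The diagram of the region containing a point x, read off x itself:
   [posx], [arcx], [keptx], [chainx], [sigmax] are [shi_pos], [shi_arc],
   [shi_kept_arc], [same_chain], [sigma_shi] (see [sigma_shi_component]). *)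
Section Diagram.
Variables (R : realFieldType) (n : nat) (x : 'I_n -> R).

Definition posx (m : 'I_n) : nat := (#|[set k | x m < x k]|).+1.

Definition arcx (i j : 'I_n) : bool := (i < j)%N && (1 < x i - x j).

Definition keptx (i l : 'I_n) : bool :=
  arcx i l &&
  ~~ [exists j, exists k, [&& arcx j k, (j, k) != (i, l),
        (posx i <= posx j)%N & (posx k <= posx l)%N]].

Definition adjx : rel 'I_n := fun a b => keptx a b || keptx b a.

Definition chainx (a b : 'I_n) : bool := connect adjx a b.

Definition sigmax : {ffun 'I_n -> nat} :=
  [ffun i => \big[minn/n.+1]_(c | chainx i c) posx c].

Definition headx (h : 'I_n) : bool := [forall c, ~~ keptx c h].

Hypothesis x_inj : injective x.

Lemma posx_lt a b : (posx a < posx b)%N = (x b < x a).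
Proof.
rewrite /posx ltnS; case: (ltgtP (x b) (x a)) => [ba|ab|/x_inj ->]; last by rewrite ltnn.
- apply: proper_card; rewrite properE; apply/andP; split.
    by apply/subsetP=> k; rewrite !inE => /(lt_trans ba).
  by apply/subsetPn; exists a; rewrite !inE ?ba ?ltxx.
- apply/negbTE; rewrite -ltnNge ltnS; apply: subset_leq_card.
  by apply/subsetP=> k; rewrite !inE => /(lt_trans ab).
Qed.

Lemma posx_le a b : (posx a <= posx b)%N = (x b <= x a).
Proof. by rewrite leqNgt posx_lt leNgt. Qed.

Lemma posx_ranking : ranking posx.
Proof.
split=> [a b eq_ab|i].
  by apply: x_inj; apply/eqP; rewrite eq_le -!posx_le eq_ab leqnn.
have above_i : [set k | x i < x k] \subset [set~ i].
  by apply/subsetP=> k; rewrite !inE; apply: contraTneq => ->; rewrite ltxx.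
have := subset_leq_card above_i; rewrite cardsC1 card_ord /posx ltnS /= => le.
by rewrite (leq_ltn_trans le) // ltn_predL (leq_ltn_trans (leq0n i) (ltn_ord i)).
Qed.

Lemma arcx_lt i j : arcx i j -> (i < j)%N /\ (posx i < posx j)%N.
Proof.
by case/andP=> -> ij; rewrite posx_lt -subr_gt0 (lt_trans ltr01 ij).
Qed.

Lemma keptx_arc i j : keptx i j -> arcx i j.
Proof. by case/andP. Qed.

Lemma keptx_lt i j : keptx i j -> (i < j)%N /\ (posx i < posx j)%N.
Proof. by move/keptx_arc/arcx_lt. Qed.

Lemma keptx_minimal i l j k : keptx i l -> arcx j k -> (j, k) != (i, l) ->
  (posx i <= posx j)%N -> (posx k <= posx l)%N -> False.
Proof.
case/andP=> _ /negP no_inner jk ne il kl; apply: no_inner.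
by apply/existsP; exists j; apply/existsP; exists k; rewrite jk ne il kl.
Qed.

Lemma keptx_fun c d d' : keptx c d -> keptx c d' -> d = d'.
Proof.
move=> cd cd'; apply/eqP/negP=> /negP ne.
case: (leqP (posx d') (posx d)) => le.
  by apply: keptx_minimal cd (keptx_arc cd') _ (leqnn _) le; rewrite xpair_eqE eqxx eq_sym.
apply: keptx_minimal cd' (keptx_arc cd) _ (leqnn _) (ltnW le).
by rewrite xpair_eqE eqxx.
Qed.

Lemma keptx_inj c c' d : keptx c d -> keptx c' d -> c = c'.
Proof.
move=> cd c'd; apply/eqP/negP=> /negP ne.
case: (leqP (posx c) (posx c')) => le.
  by apply: keptx_minimal cd (keptx_arc c'd) _ le (leqnn _); rewrite xpair_eqE eqxx eq_sym andbT.
apply: keptx_minimal c'd (keptx_arc cd) _ (ltnW le) (leqnn _).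
by rewrite xpair_eqE eqxx andbT.
Qed.

Lemma keptx_nest c d c' d' : keptx c d -> keptx c' d' ->
  (posx c < posx c')%N = (posx d < posx d')%N.
Proof.
have strict a b a' b' : keptx a b -> keptx a' b' -> (posx a < posx a')%N ->
    (posx b < posx b')%N.
  move=> ab a'b' lt; rewrite ltnNge; apply/negP => le.
  apply: keptx_minimal ab (keptx_arc a'b') _ (ltnW lt) le.
  by apply: contraTneq lt => -[-> _]; rewrite ltnn.
move=> cd c'd'; apply/idP/idP; first exact: strict.
case: (ltngtP (posx c) (posx c')) => // [/(strict _ _ _ _ c'd' cd)|].
  by move=> lt' lt; have := ltn_trans lt lt'; rewrite ltnn.
move/(proj1 (posx_ranking)) => cc'; rewrite cc' in cd.
by rewrite (keptx_fun cd c'd') ltnn.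
Qed.

Lemma reachx_le a b : connect keptx a b -> (a <= b)%N /\ (posx a <= posx b)%N.
Proof.
case/connectP=> p; elim: p a => [|c p IH] a /=; first by move=> _ ->.
case/andP=> /keptx_lt [ac ac'] /IH cb /cb [cb1 cb2].
by split; [apply: leq_trans (ltnW ac) cb1 | apply: leq_trans (ltnW ac') cb2].
Qed.

Lemma chainx_sym a b : chainx a b = chainx b a.
Proof. by apply: sym_connect_sym => u v; rewrite /adjx orbC. Qed.

Lemma chainx_trans a b c : chainx a b -> chainx b c -> chainx a c.
Proof. exact: connect_trans. Qed.

Lemma keptx_chain a b : keptx a b -> chainx a b.
Proof. by move=> ab; apply: connect1; rewrite /adjx ab. Qed.

Lemma chainx_reach a b : chainx a b -> connect keptx a b || connect keptx b a.
Proof.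
case/connectP=> p; elim/last_ind: p b => [|p c IH] b; first by move=> _ ->; rewrite connect0.
rewrite rcons_path last_rcons => /andP [/IH /(_ erefl)]; set c' := last a p => reach_c' adj ->.
case/orP: reach_c' adj => reach_c'; case/orP => kept.
- by rewrite (connect_trans reach_c' (connect1 kept)).
- case: (eqVneq a c') => [->|ac']; first by rewrite (connect1 kept) orbT.
  have [e ae ec'] := connect_last_step reach_c' ac'.
  by rewrite (keptx_inj kept ec') ae.
- case: (eqVneq c' a) => [<-|c'a]; first by rewrite (connect1 kept).
  have [e c'e ea] := connect_first_step reach_c' c'a.
  by rewrite (keptx_fun kept c'e) ea orbT.
- by rewrite (connect_trans (connect1 kept) reach_c') orbT.
Qed.

Lemma headx_reach h c : headx h -> chainx h c -> connect keptx h c.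
Proof.
move=> hh /chainx_reach /orP [//|ch]; case: (eqVneq c h) => [->|ne]; first exact: connect0.
by have [e _ eh] := connect_last_step ch ne; move/forallP: hh => /(_ e); rewrite eh.
Qed.

Lemma sigmax_head i h : chainx i h -> headx h -> sigmax i = posx h.
Proof.
move=> ih hh; rewrite ffunE; apply/eqP; rewrite eqn_leq; apply/andP; split.
  exact: (@bigmin_le_cond _ nat).
apply: (@le_bigmin _ nat) => [|c ic]; first by case/andP: (proj2 posx_ranking h) => _ /leqW.
have /(headx_reach hh) : chainx h c by apply: chainx_trans ic; rewrite chainx_sym.
by case/reachx_le.
Qed.

Definition chain_head (i : 'I_n) : 'I_n := [arg min_(c < i | chainx i c) val c].

Lemma chain_headP i : chainx i (chain_head i) /\ headx (chain_head i).
Proof.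
rewrite /chain_head; case: arg_minnP; first exact: connect0.
move=> h ih h_least; split => //; apply/forallP=> c; apply/negP=> ch.
have ic : chainx i c by apply: chainx_trans ih _; rewrite chainx_sym keptx_chain.
by move: (h_least c ic); rewrite leqNgt (proj1 (keptx_lt ch)).
Qed.

Lemma sigmax_chain_head i : sigmax i = posx (chain_head i).
Proof. by have [ih hh] := chain_headP i; apply: sigmax_head. Qed.

Lemma eq_sigmax_chain a b : (sigmax a == sigmax b) = chainx a b.
Proof.
apply/eqP/idP => [|ab].
  rewrite !sigmax_chain_head => /(proj1 posx_ranking) same_head.
  have [ah _] := chain_headP a; have [bh _] := chain_headP b.
  by apply: chainx_trans ah _; rewrite same_head chainx_sym.
rewrite !ffunE; apply: eq_bigl => c; apply/idP/idP; last exact: chainx_trans.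
by apply: chainx_trans; rewrite chainx_sym.
Qed.

Lemma sigmax_le_posx i : (sigmax i <= posx i)%N.
Proof. by rewrite ffunE; apply: (@bigmin_le_cond _ nat); exact: connect0. Qed.

Lemma sigmax_range i : (0 < sigmax i <= n)%N.
Proof. by rewrite sigmax_chain_head; exact: (proj2 posx_ranking). Qed.

Lemma sigmax_parking j : (j <= n)%N -> (j <= #|[set i | sigmax i <= j]|)%N.
Proof.
move=> jn; rewrite -{1}(card_ranking_leq posx_ranking jn); apply: subset_leq_card.
by apply/subsetP=> i; rewrite !inE; apply: leq_trans (sigmax_le_posx i).
Qed.

Lemma chainx_reach_lt a b : chainx a b -> (a < b)%N -> connect keptx a b.
Proof.
case/chainx_reach/orP => // /reachx_le [ba _] ab.
by have := leq_ltn_trans ba ab; rewrite ltnn.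
Qed.

Lemma keptx_fiber_next c d : keptx c d = fiber_next sigmax c d.
Proof.
rewrite /fiber_next eq_sigmax_chain; apply/idP/idP => [cd|/and3P [cd c_lt /forallP between]].
  rewrite keptx_chain // (proj1 (keptx_lt cd)); apply/forallP=> e; apply/implyP.
  rewrite eq_sigmax_chain => ed; apply/negP => /andP [ce e_lt].
  have ed_ne : e != d by rewrite neq_ltn e_lt.
  have [e' ee' e'd] := connect_last_step (chainx_reach_lt ed e_lt) ed_ne.
  rewrite -(keptx_inj cd e'd) in ee'; have [ec _] := reachx_le ee'.
  by have := leq_ltn_trans ec ce; rewrite ltnn.
have cd_ne : c != d by rewrite neq_ltn c_lt.
have [e ce ed] := connect_last_step (chainx_reach_lt cd c_lt) cd_ne.
case: (eqVneq e c) => [<-//|ec]; have [ce_le _] := reachx_le ce.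
have := between e; rewrite eq_sigmax_chain (keptx_chain ed) /=.
by rewrite ltn_neqAle eq_sym ec ce_le (proj1 (keptx_lt ed)).
Qed.

Lemma arcx_kept i j : arcx i j = (i < j)%N &&
  [exists c, exists d, [&& keptx c d, (posx i <= posx c)%N & (posx d <= posx j)%N]].
Proof.
apply/idP/andP => [ij|[i_lt /existsP [c /existsP [d /and3P [cd ic dj]]]]]; last first.
  rewrite /arcx i_lt; rewrite !posx_le in ic dj.
  by apply: lt_le_trans (proj2 (andP (keptx_arc cd))) _; rewrite lerB.
split; first exact: (proj1 (arcx_lt ij)).
pose inside (cd : 'I_n * 'I_n) :=
  [&& arcx cd.1 cd.2, (posx i <= posx cd.1)%N & (posx cd.2 <= posx j)%N].
have [[c d] /and3P [cd ic dj] least] := @arg_minnP _ (i, j) inside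
  (fun cd => posx cd.2 - posx cd.1)%N (introT and3P (And3 ij (leqnn _) (leqnn _))).
apply/existsP; exists c; apply/existsP; exists d; rewrite ic dj /keptx cd /= !andbT.
apply/negP; case/existsP => c'; case/existsP => d'; case/and4P => c'd' ne cc' d'd.
have inner : inside (c', d').
  by rewrite /inside /= c'd' (leq_trans ic cc') (leq_trans d'd dj).
have /= span := least _ inner; have [[_ lt] [_ lt']] := (arcx_lt cd, arcx_lt c'd').
have [/(proj1 posx_ranking) c'c /(proj1 posx_ranking) d'd'] :
  posx c' = posx c /\ posx d' = posx d by lia.
by rewrite c'c d'd' eqxx in ne.
Qed.

Lemma posx_queue_order : queue_order (fiber_next sigmax) sigmax posx.
Proof.
split; first exact: posx_ranking.
- move=> h /forallP hh; rewrite (sigmax_head (connect0 _ h)) //.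
  by apply/forallP => c; rewrite keptx_fiber_next.
- by move=> c d; rewrite -keptx_fiber_next => /keptx_lt [].
- by move=> c d c' d'; rewrite -!keptx_fiber_next; exact: keptx_nest.
Qed.

End Diagram.

Section SameSigma.
Variables (R : realFieldType) (n : nat) (x1 x2 : 'I_n -> R).
Hypotheses (x1_inj : injective x1) (x2_inj : injective x2).
Hypothesis same_sigma : sigmax x1 = sigmax x2.

Lemma posx_same : posx x1 =1 posx x2.
Proof.
apply: queue_order_unique (posx_queue_order x1_inj) _.
by rewrite same_sigma; exact: posx_queue_order.
Qed.

Lemma ltx_same m k : (x1 m < x1 k) = (x2 m < x2 k).
Proof. by rewrite -(posx_lt x1_inj) -(posx_lt x2_inj) !posx_same. Qed.

Lemma arcx_same : arcx x1 =2 arcx x2.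
Proof.
move=> i j; rewrite !arcx_kept //; congr (_ && _).
apply: eq_existsb => c; apply: eq_existsb => d.
by rewrite !keptx_fiber_next // same_sigma !posx_same.
Qed.

End SameSigma.

Section Separation.
Variables (R : realFieldType) (n : nat) (U : nat -> nat -> bool).
Hypothesis U_mono : forall p q p' q', U p q -> (p' <= p)%N -> (q <= q')%N -> U p' q'.

Definition separates (m : nat) (y : nat -> R) :=
  forall p q, (m <= p)%N -> (p < q <= n)%N ->
  [/\ y q < y p, U p q -> 1 < y p - y q & ~~ U p q -> y p - y q < 1].

Lemma separates_extend m y : separates m.+1 y ->
  exists v, separates m (fun p => if p == m then v else y p).
Proof.
move=> sep.
pose L := \big[Order.max/y m.+1]_(q < n.+1 | U m q) (y q + 1).
pose H := \big[Order.min/L + 2]_(q < n.+1 | (m < q)%N && ~~ U m q) (y q + 1).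
have L_lt_H : L < H.
  apply/bigmin_gtP; split=> [|q /andP [mq notU]]; first by rewrite ltrDl.
  apply/bigmax_ltP; split=> [|q' Uq'].
    case: (ltngtP m.+1 q) mq => // [mq _|<- _]; last by rewrite ltrDl.
    have [_ _] := sep _ _ (leqnn _) (introT andP (conj mq (ltn_ord q))).
    by rewrite -ltrBlDl; apply; apply: contra notU => /U_mono; apply.
  rewrite ltrD2r; have qq' : (q < q')%N.
    by rewrite ltnNge; apply: contra notU => /(U_mono Uq' (leqnn _)).
  by have [] := sep _ _ mq (introT andP (conj qq' (ltn_ord q'))).
exists ((L + H) / 2) => p q mp /andP [pq qn].
have q_ne : (q == m) = false by apply/negbTE; rewrite neq_ltn (leq_trans _ pq) ?orbT.
rewrite q_ne; case: eqVneq => [p_m|p_ne]; last first.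
  by apply: sep; rewrite ?pq // ltn_neqAle eq_sym p_ne.
subst p; have Lv : L < (L + H) / 2 by rewrite midf_lt.
have vH : (L + H) / 2 < H by rewrite midf_lt.
have q_ord : (q < n.+1)%N by [].
split.
- apply: le_lt_trans Lv; have yL : y m.+1 <= L := bigmax_ge_id _ _ _ _.
  case: (ltngtP m.+1 q) pq => // [mq _|<- _ //].
  by have [lt _ _] := sep _ _ (leqnn _) (introT andP (conj mq qn)); rewrite ltW ?(lt_le_trans lt).
- move=> Uq; rewrite ltrBrDl; apply: le_lt_trans Lv.
  exact: (@le_bigmax_cond _ _ _ _ (Ordinal q_ord)).
- move=> notU; rewrite ltrBlDl; apply: lt_le_trans vH _.
  by apply: (@bigmin_le_cond _ _ _ _ (Ordinal q_ord)); rewrite /= pq.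
Qed.

Lemma separates_exists : exists y, separates 0 y.
Proof.
suff : forall k, (k <= n)%N -> exists y, separates (n - k) y.
  by move/(_ n (leqnn n)); rewrite subnn.
elim=> [_|k IH kn].
  by exists (fun=> 0) => p q; rewrite subn0 => np /andP [pq qn]; lia.
have [y] := IH (ltnW kn); have -> : (n - k = (n - k.+1).+1)%N by lia.
move=> /separates_extend [v sep].
by exists (fun p => if p == (n - k.+1)%N then v else y p).
Qed.

End Separation.

Section QueueOrderPoint.
Variables (R : realFieldType) (n : nat) (S : rel 'I_n) (g P : 'I_n -> nat).
Hypothesis qo : queue_order S g P.
Hypothesis S_lt : forall c d, S c d -> (c < d)%N.

Let U p q := [exists c, exists d, [&& S c d, (p <= P c)%N & (P d <= q)%N]].

Let U_mono p q p' q' : U p q -> (p' <= p)%N -> (q <= q')%N -> U p' q'.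
Proof.
case/existsP=> c /existsP [d /and3P [cd pc dq]] p'p qq'; apply/existsP; exists c.
by apply/existsP; exists d; rewrite cd (leq_trans p'p pc) (leq_trans dq qq').
Qed.

Let U_lt p q : U p q -> (p < q)%N.
Proof.
case/existsP=> c /existsP [d /and3P [cd pc dq]].
by case: qo => _ _ before _; apply: leq_ltn_trans pc (leq_trans (before _ _ cd) dq).
Qed.

Section SeparatedPoint.
Variable y : nat -> R.
Hypothesis sep : separates n U 0 y.

Let x a := y (P a).

Let sepP a b : (P a < P b)%N ->
  [/\ x b < x a, U (P a) (P b) -> 1 < x a - x b & ~~ U (P a) (P b) -> x a - x b < 1].
Proof.
case: qo => [[_ P_range] _ _ _] ab.
by apply: sep; rewrite ?ab //=; case/andP: (P_range b).
Qed.

Let ltx a b : (x a < x b) = (P b < P a)%N.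
Proof.
case: qo => [[P_inj _] _ _ _].
case: (ltngtP (P b) (P a)) => [ba|ab|/P_inj ->]; last by rewrite ltxx.
  by case: (sepP ba).
by apply/negbTE; rewrite -leNgt ltW //; case: (sepP ab).
Qed.

Let x_inj : injective x.
Proof.
case: qo => [[P_inj _] _ _ _] a b ab; apply: P_inj.
case: (ltngtP (P a) (P b)) => // lt; first by have := ltx b a; rewrite ab ltxx lt.
by have := ltx a b; rewrite ab ltxx lt.
Qed.

Let posE : posx x =1 P.
Proof.
case: qo => rkP _ _ _; apply: ranking_eq (posx_ranking x_inj) rkP _ => a b.
by rewrite posx_le // leNgt ltx -leqNgt.
Qed.

Let arcE u v : arcx x u v = (u < v)%N && U (P u) (P v).
Proof.
congr (_ && _); case: (ltnP (P u) (P v)) => [uv|vu].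
  case: (sepP uv) => _ U1 U2; case: (boolP (U _ _)) => [/U1 -> //|/U2 lt1].
  by apply/negbTE; rewrite -leNgt ltW.
have -> : U (P u) (P v) = false by apply: contraTF vu => /U_lt; rewrite -ltnNge.
apply/negbTE; rewrite -leNgt (le_trans _ ler01) // subr_le0 leNgt ltx.
by rewrite -leqNgt.
Qed.

Let U_S c d : S c d -> U (P c) (P d).
Proof. by move=> cd; apply/existsP; exists c; apply/existsP; exists d; rewrite cd !leqnn. Qed.

Let keptE : keptx x =2 S.
Proof.
move=> c d; apply/idP/idP => [cd|cd].
  have := keptx_arc cd; rewrite arcE => /andP [_ /existsP [c' /existsP [d']]].
  case/and3P => c'd' cc' d'd; case: (eqVneq (c', d') (c, d)) => [[<- <-] //|ne].
  have c'd'_arc : arcx x c' d' by rewrite arcE S_lt // U_S.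
  by have := keptx_minimal cd c'd'_arc ne; rewrite !posE => /(_ cc' d'd).
rewrite /keptx arcE S_lt // U_S //=; apply/negP; case/existsP=> j; case/existsP=> k.
case/and4P; rewrite arcE !posE => /andP [_ /existsP [c' /existsP [d']]].
case/and3P => c'd' jc' d'k ne cj kd.
have [cc' dd'] := queue_order_no_nest qo cd c'd' (leq_trans cj jc') (leq_trans d'k kd).
case: qo => [[P_inj _] _ _ _]; subst c' d'.
have /P_inj jc : P j = P c by apply/eqP; rewrite eqn_leq jc' cj.
have /P_inj kd' : P k = P d by apply/eqP; rewrite eqn_leq kd d'k.
by rewrite jc kd' eqxx in ne.
Qed.

Lemma separated_queue_point :
  [/\ injective x, forall u v : 'I_n, (u < v)%N -> x u - x v != 1,
      posx x =1 P & keptx x =2 S].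
Proof.
split=> // u v uv; case: (qo) => [[P_inj _] _ _ _].
case: (ltngtP (P u) (P v)) => [lt|lt|/P_inj e].
- case: (sepP lt) => _ U1 U2; case: (U (P u) (P v)) U1 U2 => [/(_ isT)|_ /(_ isT)].
    by move/gt_eqF ->.
  by move/lt_eqF ->.
- by rewrite lt_eqF // (lt_trans _ ltr01) // subr_lt0 ltx.
- by rewrite e ltnn in uv.
Qed.

End SeparatedPoint.

Lemma queue_order_point : exists x : 'I_n -> R,
  [/\ injective x, forall u v : 'I_n, (u < v)%N -> x u - x v != 1,
      posx x =1 P & keptx x =2 S].
Proof.
have [y sep] := separates_exists R n U_mono.
by exists (fun a => y (P a)); exact: separated_queue_point.
Qed.

End QueueOrderPoint.

Lemma parking_point (R : realFieldType) n (f : 'I_n -> nat) :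
  (forall i, (0 < f i <= n)%N) ->
  (forall j, (0 < j <= n)%N -> (j <= #|[set i | f i <= j]|)%N) ->
  exists x : 'I_n -> R, [/\ injective x,
    forall u v : 'I_n, (u < v)%N -> x u - x v != 1 & sigmax x =1 f].
Proof.
move=> f_range f_park; have [P qo] := parking_queue_order f_range f_park.
have [x [x_inj x_unit posE keptE]] := queue_order_point R qo (@fiber_next_lt _ f).
exists x; split=> //; apply: eq_fiber_next => [c d|h].
  by rewrite -keptx_fiber_next // keptE.
rewrite -[_ \in _]/(fiber_min _ h) fiber_minE => /forallP h_min.
have h_head : headx x h by apply/forallP => c; rewrite keptx_fiber_next.
rewrite (sigmax_head x_inj (connect0 _ h) h_head) posE; case: qo => _ -> //.
by apply/forallP => c; rewrite -keptE keptx_fiber_next.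
Qed.

Local Open Scope classical_set_scope.

Lemma convex_lt (R : realFieldType) (a b c t : R) :
  0 <= t <= 1 -> a < c -> b < c -> a + t * (b - a) < c.
Proof. by case/andP=> t0 t1 ac bc; case: (leP a b) => ab; nra. Qed.

Lemma convex_gt (R : realFieldType) (a b c t : R) :
  0 <= t <= 1 -> c < a -> c < b -> c < a + t * (b - a).
Proof. by case/andP=> t0 t1 ac bc; case: (leP a b) => ab; nra. Qed.

Lemma convex_avoid01 (R : realFieldType) (a b t : R) : 0 <= t <= 1 ->
  a != 0 -> a != 1 -> b != 0 -> b != 1 -> (a < 0) = (b < 0) -> (1 < a) = (1 < b) ->
  a + t * (b - a) != 0 /\ a + t * (b - a) != 1.
Proof.
move=> t01 a0 a1 b0 b1 same0 same1.
case: (ltP a 0) => [a_neg|a_nneg].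
  have b_neg : b < 0 by rewrite -same0.
  have lt0 := convex_lt t01 a_neg b_neg.
  by split; apply/negbT/lt_eqF => //; exact: lt_trans lt0 ltr01.
case: (boolP (1 < a)) => [a_big|a_small].
  have b_big : 1 < b by rewrite -same1.
  have gt1 := convex_gt t01 a_big b_big.
  by split; apply/negbT/gt_eqF => //; exact: lt_trans ltr01 gt1.
have a_pos : 0 < a by rewrite lt_neqAle eq_sym a0.
have b_pos : 0 < b by rewrite lt_neqAle eq_sym b0 leNgt -same0 -leNgt.
have a_lt1 : a < 1 by rewrite lt_neqAle a1 leNgt.
have b_lt1 : b < 1 by rewrite lt_neqAle b1 leNgt -same1.
split; first by apply/negbT/gt_eqF; exact: (convex_gt t01 a_pos b_pos).
by apply/negbT/lt_eqF; exact: (convex_lt t01 a_lt1 b_lt1).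
Qed.

Lemma connected_continuous_side (T : topologicalType) (R : realType)
    (B : set T) (g : T -> R) c x y :
  connected B -> continuous g -> (forall z, B z -> g z != c) -> B x -> B y ->
  (g x < c) = (g y < c).
Proof.
move=> B_conn g_cont g_ne Bx By.
have /connected_intervalP gB_itv : connected (g @` B).
  by apply: connected_continuous_connected B_conn _; exact: continuous_subspaceT.
suff side u v : B u -> B v -> g u < c -> g v < c by apply/idP/idP; apply: side.
move=> Bu Bv gu; rewrite ltNge; apply/negP => gv.
have [|z Bz gz] := gB_itv (g u) (g v) (ex_intro2 _ _ u Bu erefl) (ex_intro2 _ _ v Bv erefl) c.
  by rewrite (ltW gu) gv.
by have := g_ne z Bz; rewrite gz eqxx.
Qed.

Section ShiRegions.
Variables (R : realType) (n : nat).
Local Notation A := (@shi_complement R n).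

Definition same_side (x y : 'rV[R]_n) : Prop :=
  (forall m k, (Defs.coord x m < Defs.coord x k) = (Defs.coord y m < Defs.coord y k)) /\
  arcx (Defs.coord x) =2 arcx (Defs.coord y).

Lemma shi_complement_inj x : A x -> injective (Defs.coord x).
Proof.
move=> Ax i j xij; apply/eqP/negP => /negP; rewrite neq_ltn.
by case/orP => /Ax []; rewrite xij subrr eqxx.
Qed.

Lemma coordB_continuous (i j : 'I_n) :
  continuous (fun z : 'rV[R]_n => Defs.coord z i - Defs.coord z j).
Proof. by move=> z; apply: continuousB; apply: coord_continuous. Qed.

Lemma component_same_side x y : connected_component A x y -> same_side x y.
Proof.
case=> B [Bx BA B_conn] By; split=> [m k|i j].
  case: (eqVneq m k) => [->|mk]; first by rewrite !ltxx.
  have ne0 z : B z -> Defs.coord z m - Defs.coord z k != 0.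
    move=> /BA /shi_complement_inj z_inj; rewrite subr_eq0.
    by apply: contra mk => /eqP /z_inj ->.
  rewrite -[LHS]subr_lt0 -[RHS]subr_lt0.
  exact: (connected_continuous_side B_conn (@coordB_continuous m k) ne0 Bx By).
rewrite /arcx; case: ltnP => //= ij.
have ne1 z : B z -> Defs.coord z i - Defs.coord z j != 1 by move=> /BA /(_ _ _ ij) [].
rewrite !lt_neqAle ![1 == _]eq_sym (ne1 _ Bx) (ne1 _ By) /= !leNgt.
by rewrite (connected_continuous_side B_conn (@coordB_continuous i j) ne1 Bx By).
Qed.

Lemma same_side_component x y : A x -> A y -> same_side x y ->
  connected_component A x y.
Proof.
move=> Ax Ay [same_lt same_arc].
pose S := (fun t : R => x + t *: (y - x)) @` `[0, 1].
have S_conn : connected S.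
  apply: connected_continuous_connected; first exact: segment_connected.
  apply: continuous_subspaceT => t; apply: cvgD; first exact: cvg_cst.
  by apply: continuousZr_tmp; apply: cvg_id.
have Sx : S x by exists 0; [rewrite /= in_itv /= lexx ler01 | rewrite scale0r addr0].
have Sy : S y by exists 1; [rewrite /= in_itv /= lexx ler01 | rewrite scale1r addrC subrK].
apply: (connected_component_max Sx) S_conn _ Sy => _ [t /= t01 <-] i j ij.
have {}t01 : 0 <= t <= 1 by move: t01; rewrite in_itv.
set a := Defs.coord x i - Defs.coord x j; set b := Defs.coord y i - Defs.coord y j.
have -> : Defs.coord (x + t *: (y - x)) i - Defs.coord (x + t *: (y - x)) j = a + t * (b - a).
  by rewrite /a /b /Defs.coord !mxE; ring.
have [[a0 a1] [b0 b1]] := (Ax i j ij, Ay i j ij).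
apply: convex_avoid01 => //; first by rewrite !subr_lt0 same_lt.
by have := same_arc i j; rewrite /arcx ij.
Qed.

Lemma sigma_shi_component x :
  A x -> sigma_shi (connected_component A x) = sigmax (Defs.coord x).
Proof.
move=> Ax; set Rg := connected_component A x.
have Rx : Rg x := connected_component_refl Ax.
have posE : shi_pos Rg = posx (Defs.coord x).
  apply: funext => m; congr S; apply: eq_card => k; rewrite [in RHS]inE /=.
  apply/idP/idP => [/[!in_setE] /asboolP/(_ x Rx) //|xmk].
  rewrite in_setE; apply/asboolP => y /component_same_side.
  by case=> same_lt _; rewrite -same_lt.
have arcE : shi_arc Rg = arcx (Defs.coord x).
  apply: funext => i; apply: funext => j; rewrite /shi_arc /arcx.
  case: ltnP => //= ij; apply/idP/idP => [/asboolP/(_ x Rx) //|xij].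
  apply/asboolP => y /component_same_side [_ /(_ i j)].
  by rewrite /arcx ij xij.
by rewrite /sigma_shi /same_chain /shi_adj /shi_kept_arc posE arcE.
Qed.

End ShiRegions.

Lemma parking_functionE n (f : {ffun 'I_n -> nat}) : parking_function f <->
  (forall i, (0 < f i <= n)%N) /\
  (forall j, (0 < j <= n)%N -> (j <= #|[set i | (f i <= j)%N]%SET|)%N).
Proof.
have card_le j : #|[set i : 'I_n | (f i <= j)%N]| = #|[set i | (f i <= j)%N]%SET|.
  by apply: eq_card => i; rewrite [in RHS]inE; apply/idP/idP => [/[!in_setE] //|]; rewrite in_setE.
by rewrite /parking_function; split=> -[f_range f_park]; split=> // j /f_park; rewrite card_le.
Qed.

Theorem theorem2p2 (R : realType) (n : nat) (hn : (1 <= n)%N) :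
  (forall Rg, @shi_regions R n Rg -> parking_function (sigma_shi Rg)) /\
  (forall Rg1 Rg2, @shi_regions R n Rg1 -> @shi_regions R n Rg2 ->
     sigma_shi Rg1 = sigma_shi Rg2 -> Rg1 = Rg2) /\
  (forall f : {ffun 'I_n -> nat}, parking_function f ->
     exists2 Rg, @shi_regions R n Rg & sigma_shi Rg = f).
Proof.
split; [|split].
- move=> Rg [x Ax <-]; have x_inj := shi_complement_inj Ax.
  rewrite sigma_shi_component //; apply/parking_functionE; split=> [i|j /andP [_ jn]].
    exact: sigmax_range.
  exact: sigmax_parking.
- move=> Rg1 Rg2 [x1 A1 <-] [x2 A2 <-]; rewrite !sigma_shi_component // => same.
  have [x1_inj x2_inj] := (shi_complement_inj A1, shi_complement_inj A2).
  apply: same_connected_component; apply: same_side_component A1 A2 _.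
  by split; [exact: ltx_same same | exact: arcx_same same].
move=> f /parking_functionE [f_range f_park].
have [xf [xf_inj xf_unit xf_sigma]] := parking_point R f_range f_park.
pose x : 'rV[R]_n := \row_i xf i.
have xE : Defs.coord x = xf by apply: funext => i; rewrite /Defs.coord mxE.
have Ax : shi_complement x.
  move=> i j ij; rewrite xE subr_eq0 xf_unit //; split=> //.
  by apply: contraTneq ij => /xf_inj ->; rewrite ltnn.
exists (connected_component (@shi_complement R n) x); first by exists x.
by rewrite sigma_shi_component // xE; apply/ffunP => i; rewrite xf_sigma.
Qed.
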